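(* Let $T$ be a first-order theory over a function-free vocabulary $\Sigma$, let $O$ be a propagator for $T$, and let $D$ be a finite set. Let $\mathcal{K}$ be the class of CSPs of the form $\langle \{C_T\}, V_{\tilde I}, \mathit{dom}_{\tilde I}\rangle$ where $\tilde I$ ranges over four-valued $\Sigma$-structures with domain $D$. Then the operator $f$ on $\mathcal{K}$ defined by $f(\langle \{C_T\}, V_{\tilde I}, \mathit{dom}_{\tilde I}\rangle) = \langle \{C_T\}, V_{\tilde I}, \mathit{dom}_{O(\tilde I)}\rangle$ is a domain reducing propagator.
   Context: Vocabularies are finite sets of predicate symbols with arities. Truth values: $\mathbf{t}$ (true), $\mathbf{f}$ (false), $\mathbf{u}$ (unknown), $\mathbf{i}$ (inconsistent). The precision order $\le_p$ on truth values: $\mathbf{u} \le_p \mathbf{t} \le_p \mathbf{i}$ and $\mathbf{u} \le_p \mathbf{f} \le_p \mathbf{i}$, with $\mathbf{t},\mathbf{f}$ incomparable. A four-valued $\Sigma$-structure $\tilde I$ consists of a domain $D$ and, for each $P/n \in \Sigma$, a function $P^{\tilde I}: D^n \to \{\mathbf{t},\mathbf{f},\mathbf{u},\mathbf{i}\}$; it is two-valued if it only uses $\mathbf{t},\mathbf{f}$, and two-valued structures are identified with ordinary first-order structures ($\overline{d} \in P^I$ iff $P^I(\overline{d})=\mathbf{t}$). For structures with the same domain, $\tilde I \le_p \tilde J$ iff $P^{\tilde I}(\overline{d}) \le_p P^{\tilde J}(\overline{d})$ for all $P,\overline{d}$. A propagator for a theory $T$ over $\Sigma$ is a map $O$ from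 four-valued $\Sigma$-structures to four-valued $\Sigma$-structures such that (i) $\tilde I \le_p O(\tilde I)$ for every $\tilde I$ (in particular $O(\tilde I)$ has the same domain), and (ii) for every two-valued model $M$ of $T$ with $\tilde I \le_p M$, also $O(\tilde I) \le_p M$. CSPs: a constraint on a sequence of variables $(v_1,\dots,v_n)$ is a set of $n$-tuples. A CSP is a tuple $\langle \mathcal{C}, V, \mathit{dom}\rangle$ with $V$ a set of (constraint) variables, $\mathit{dom}$ mapping each variable to a domain, and $\mathcal{C}$ a set of constraints on finite sequences of variables from $V$. A solution is a map $d$ with $d(v)\in\mathit{dom}(v)$ for all $v\in V$ and $(d(v_1),\dots,d(v_n))\in C$ for every constraint $C\in\mathcal{C}$ on $(v_1,\dots,v_n)$. Two CSPs with the same variables are equivalent if they have the same solutions. A (CSP) propagator is a function mapping CSPs to equivalent CSPs; it is domain reducing if it keeps the set of constraints unchanged and satisfies $\mathit{dom}_2(v)\subseteq \mathit{dom}_1(v)$ for all $v$, where $\mathit{dom}_1,\mathit{dom}_2$ are the domain maps of input and output. CSP of $\langle T,\tilde I\rangle$ for finite $\tilde I$ with domain $D$: $V_{\tilde I}$ is the set of all domain atoms $P(\overline{d})$ with $P/n\in\Sigma$, $\overline{d}\in D^n$, with a fixed total order (the $i$th domain atom). $\mathit{dom}_{\tilde I}(P(\overline{d}))$ is $\{\mathbf{t},\mathbf{f}\}$, $\{\mathbf{t}\}$, $\{\mathbf{f}\}$, $\emptyset$ according as $P^{\tilde I}(\overline{d})$ is $\mathbf{u},\mathbf{t},\mathbf{f},\mathbf{i}$.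 For $\overline{\tau}\in\{\mathbf{t},\mathbf{f}\}^{|V_{\tilde I}|}$, $I_{\overline{\tau}}$ is the two-valued $\Sigma$-structure with domain $D$ in which the $i$th domain atom is true iff the $i$th entry of $\overline{\tau}$ is $\mathbf{t}$. $C_T$ is the constraint on the whole sequence of domain atoms consisting of all $\overline{\tau}$ with $I_{\overline{\tau}}\models T$. *)

From mathcomp Require Import all_boot.
Set Implicit Arguments. Unset Strict Implicit. Unset Printing Implicit Defensive.

Inductive tv := TT | FF | UU | II.

Definition tv_le (a b : tv) : bool :=
  match a, b with
  | UU, _ => true
  | TT, TT | TT, II => true
  | FF, FF | FF, II => true
  | II, II => true
  | _, _ => false
  end.

Record vocab := Vocab { sym : finType; arity : sym -> nat }.

Definition fstruct (S : vocab) (A : Type) := forall P : sym S, (arity P).-tuple A -> tv.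
Definition tstruct (S : vocab) (A : Type) := forall P : sym S, (arity P).-tuple A -> bool.

Definition tv_of_bool (b : bool) : tv := if b then TT else FF.
Definition embed S A (M : tstruct S A) : fstruct S A := fun P d => tv_of_bool (M P d).

Definition prec_le S A (I J : fstruct S A) : Prop :=
  forall (P : sym S) (d : (arity P).-tuple A), tv_le (I P d) (J P d).

Inductive form (S : vocab) : Type :=
  | FFalse
  | Atom (P : sym S) of (arity P).-tuple nat
  | Equ of nat & nat
  | Neg of form S
  | And of form S & form S
  | Or of form S & form S
  | Imp of form S & form S
  | Ex of nat & form S
  | All of nat & form S.

Definition upd (A : Type) (e : nat -> A) (x : nat) (a : A) : nat -> A :=
  fun y => if y == x then a else e y.

Fixpoint holds S A (M : tstruct S A) (e : nat -> A) (phi : form S) : Prop :=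
  match phi with
  | FFalse => False
  | Atom P args => M P (map_tuple e args)
  | Equ x y => e x = e y
  | Neg p => ~ holds M e p
  | And p q => holds M e p /\ holds M e q
  | Or p q => holds M e p \/ holds M e q
  | Imp p q => holds M e p -> holds M e q
  | Ex x p => exists a : A, holds M (upd e x a) p
  | All x p => forall a : A, holds M (upd e x a) p
  end.

Definition theory (S : vocab) := form S -> Prop.

Definition models S A (M : tstruct S A) (T : theory S) : Prop :=
  forall phi, T phi -> forall e : nat -> A, holds M e phi.

Definition propagator (S : vocab) (T : theory S)
    (O : forall A : Type, fstruct S A -> fstruct S A) : Prop :=
  forall (A : Type) (I : fstruct S A),
    prec_le I (O A I) /\
    (forall M : tstruct S A, models M T -> prec_le I (embed M) -> prec_le (O A I) (embed M)).

Record constraint (V Val : Type) := Constraint { cvars : seq V; crel : seq Val -> Prop }.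
Record csp (V Val : Type) := CSP { ccons : constraint V Val -> Prop; cdom : V -> Val -> Prop }.

Definition solution V Val (c : csp V Val) (d : V -> Val) : Prop :=
  (forall v, cdom c v (d v)) /\
  (forall C, ccons c C -> crel C (map d (cvars C))).

Definition csp_equiv V Val (c1 c2 : csp V Val) : Prop :=
  forall d, solution c1 d <-> solution c2 d.

Definition domain_reducing_step V Val (c1 c2 : csp V Val) : Prop :=
  ccons c2 = ccons c1 /\ (forall v x, cdom c2 v x -> cdom c1 v x).

Definition datom (S : vocab) (D : finType) : finType :=
  {P : sym S & (arity P).-tuple D}.

Definition dom_of S (D : finType) (I : fstruct S D) (a : datom S D) : bool -> Prop :=
  match I (tag a) (tagged a) with
  | UU => fun _ => True
  | TT => fun b => b = true
  | FF => fun b => b = false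
  | II => fun _ => False
  end.

(* I_tau : the i-th domain atom (in the order enum (datom S D)) is true iff tau_i = t *)
Definition struct_of_seq S (D : finType) (tau : seq bool) : tstruct S D :=
  fun P d => nth false tau (index (Tagged (fun P => (arity P).-tuple D) d) (enum (datom S D))).

Definition C_T S (D : finType) (T : theory S) : constraint (datom S D) bool :=
  Constraint (enum (datom S D))
    (fun tau => size tau = #|datom S D| /\ models (@struct_of_seq S D tau) T).

Definition csp_of S (D : finType) (T : theory S) (I : fstruct S D) : csp (datom S D) bool :=
  CSP (fun C => C = @C_T S D T) (dom_of I).

(** Solutions of the CSP of [<T, I>] are exactly the two-valued models of [T]
    that are at least as precise as [I].  A propagator keeps every such model
    above its output and only increases precision, so the CSP of [<T, O(I)>] has
    the same solutions and smaller domains.  The operator is well defined because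
    [I] can be recovered from the domains of its CSP. *)
From mathcomp Require Import all_boot.
From Stdlib Require Import FunctionalExtensionality.

Definition tv_dom (t : tv) : bool -> Prop :=
  match t with
  | UU => fun _ => True
  | TT => fun b => b = true
  | FF => fun b => b = false
  | II => fun _ => False
  end.

Lemma tv_le_trans : transitive tv_le.
Proof. by case; case; case. Qed.

Lemma tv_domP (t : tv) (b : bool) : tv_dom t b <-> tv_le t (tv_of_bool b).
Proof. by case: t; case: b. Qed.

Lemma tv_dom_inj : injective tv_dom.
Proof.
move=> s t est.
have eq_at b : tv_le s (tv_of_bool b) = tv_le t (tv_of_bool b).
  by apply/idP/idP => /tv_domP; [rewrite est | rewrite -est] => /tv_domP.
by move: (eq_at true) (eq_at false); clear est eq_at; case: s; case: t.
Qed.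

Lemma prec_le_trans S A (I J K : fstruct S A) :
  prec_le I J -> prec_le J K -> prec_le I K.
Proof. by move=> leIJ leJK P d; apply: tv_le_trans (leIJ P d) (leJK P d). Qed.

Section CSPOfTheory.

Variables (S : vocab) (D : finType) (T : theory S).

Lemma csp_of_inj : injective (@csp_of S D T).
Proof.
move=> I J eIJ.
apply: functional_extensionality_dep => P; apply: functional_extensionality => t.
apply: tv_dom_inj.
exact: (f_equal (fun c => cdom c (Tagged (fun P => (arity P).-tuple D) t)) eIJ).
Qed.

Definition struct_of_assignment (d : datom S D -> bool) : tstruct S D :=
  fun P t => d (Tagged (fun P => (arity P).-tuple D) t).

Lemma struct_of_seq_map (d : datom S D -> bool) :
  struct_of_seq (map d (enum (datom S D))) = struct_of_assignment d.
Proof.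
apply: functional_extensionality_dep => P; apply: functional_extensionality => t.
rewrite /struct_of_seq /struct_of_assignment.
by rewrite (nth_map (Tagged (fun P => (arity P).-tuple D) t)) ?nth_index ?index_mem ?mem_enum.
Qed.

Lemma solution_csp_ofP (I : fstruct S D) (d : datom S D -> bool) :
  solution (csp_of T I) d <->
  prec_le I (embed (struct_of_assignment d)) /\ models (struct_of_assignment d) T.
Proof.
have dom_iff : (forall a, dom_of I a (d a)) <-> prec_le I (embed (struct_of_assignment d)).
  split=> [dom_d P t | leId [P t]]; first exact/tv_domP/(dom_d (Tagged _ t)).
  exact/tv_domP/leId.
have C_T_iff : (forall C, C = C_T D T -> crel C (map d (cvars C))) <->
               models (struct_of_assignment d) T.
  split=> [/(_ _ erefl) [_] | modd _ ->]; first by rewrite struct_of_seq_map.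
  by split; [rewrite size_map cardE | rewrite struct_of_seq_map].
by move: dom_iff C_T_iff; rewrite /solution /=; tauto.
Qed.

End CSPOfTheory.

Theorem proposition3p1 (S : vocab) (T : theory S)
    (O : forall A : Type, fstruct S A -> fstruct S A) (D : finType) :
  propagator T O ->
  (forall I J : fstruct S D,
      csp_of T I = csp_of T J -> csp_of T (O D I) = csp_of T (O D J)) /\
  (forall I : fstruct S D,
      csp_equiv (csp_of T I) (csp_of T (O D I)) /\
      domain_reducing_step (csp_of T I) (csp_of T (O D I))).
Proof.
move=> propO; split=> [I J /csp_of_inj -> // | I].
have [leIO keep_models] := propO D I.
split.
- move=> d; split=> /solution_csp_ofP [leM modM]; apply/solution_csp_ofP; split=> //.
  + exact: keep_models.
  + exact: prec_le_trans leIO leM.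
- split=> // -[P t] b /tv_domP leOb.
  by apply/tv_domP; exact: tv_le_trans (leIO P t) leOb.
Qed.
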